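(* Let $m\geq1$ and $0\leq r_1<r_2\leq m$, and let $q=p^t$ be a power of an odd prime $p$, $t\geq1$. Then there exists an asymmetric quantum code with parameters $[[t2^m,\ t[k(r_2)-k(r_1)],\ d_z/d_x]]_p$, where $k(r)=\sum_{i=0}^{r}\binom{m}{i}$, $d_z\geq 2^{m-r_2}$ and $d_x\geq 2^{r_1+1}$.
   Context: An AQECC $[[n,k,d_z/d_x]]_p$ is a $p^k$-dimensional subspace of $\mathbb{C}^{p^n}$ correcting all qudit-flip errors up to $\lfloor (d_x-1)/2\rfloor$ and all phase-shift errors up to $\lfloor (d_z-1)/2\rfloor$. *)

From Stdlib Require Reals.
From HB Require Import structures.
From mathcomp Require Import all_boot all_order all_algebra.
From mathcomp Require Import complex.
From mathcomp Require Import Rstruct.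
Set Implicit Arguments. Unset Strict Implicit. Unset Printing Implicit Defensive.
Import GRing.Theory Num.Theory.
Local Open Scope ring_scope.

Definition Cx := complex Rdefinitions.R.

Definition omega (p : nat) : Cx :=
  Complex (Rtrigo_def.cos (2 * Rtrigo1.PI / p%:R))
          (Rtrigo_def.sin (2 * Rtrigo1.PI / p%:R)).

(* Computational basis of (C^p)^{\otimes n}: strings x in F_p^n. *)
Definition Basis (p n : nat) := {ffun 'I_n -> 'F_p}.

Definition Hspace (p n : nat) := {ffun Basis p n -> Cx^o}.

Definition wt (p n : nat) (a : Basis p n) : nat := #|[set i | a i != 0]|.

Definition inner (p n : nat) (u v : Hspace p n) : Cx :=
  \sum_(x : Basis p n) (u x)^* * v x.

(* Qudit-flip (shift) operator X(a): |x> |-> |x + a>. *)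
Definition Xop (p n : nat) (a : Basis p n) (v : Hspace p n) : Hspace p n :=
  [ffun x : Basis p n => v (x - a)].

Definition Zop (p n : nat) (b : Basis p n) (v : Hspace p n) : Hspace p n :=
  [ffun x : Basis p n => omega p ^+ (nat_of_ord (\sum_(i < n) b i * x i)) * v x].

Definition Eop (p n : nat) (a b : Basis p n) (v : Hspace p n) : Hspace p n :=
  Xop a (Zop b v).

(* Knill-Laflamme condition: Q corrects every error X(a)Z(b) with
   wt a <= tx (qudit-flip) and wt b <= tz (phase-shift). *)
Definition corrects (p n : nat) (Q : {vspace Hspace p n}) (tx tz : nat) : Prop :=
  forall a1 b1 a2 b2 : Basis p n,
    (wt a1 <= tx)%N -> (wt a2 <= tx)%N -> (wt b1 <= tz)%N -> (wt b2 <= tz)%N ->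
    exists c : Cx, forall u v : Hspace p n, u \in Q -> v \in Q ->
      inner (Eop a1 b1 u) (Eop a2 b2 v) = c * inner u v.

Definition AQECC (p n k dz dx : nat) (Q : {vspace Hspace p n}) : Prop :=
  \dim Q = (p ^ k)%N /\ corrects Q (dx.-1)./2 (dz.-1)./2.

Definition kRM (m r : nat) : nat := \sum_(0 <= i < r.+1) 'C(m, i).


(* The code is a CSS code built from nested Reed-Muller codes over F_p, repeated
   t times: C is RM(m - r1 - 1) and D = RM(m - r2 - 1) is contained in it, and the
   code space is spanned by the uniform superpositions over the cosets of D in C,
   of which there are p ^ (t (k(r2) - k(r1))). By the Knill-Laflamme conditions it
   corrects qudit flips of weight < d(C) / 2 and phase shifts of weight < d(D^perp) / 2.
   Both distances come from one fact: a multilinear polynomial over F_p whose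
   support has a maximal monomial x^S does not vanish at 2 ^ (m - |S|) points of
   the Boolean cube, since alternating sums over the coordinates of S isolate its
   coefficient. Twisting the codewords by (-1)^|X| makes D^perp the code of
   degree <= r2, as over F_2, so d(D^perp) >= 2 ^ (m - r2) and d(C) >= 2 ^ (r1 + 1). *)

From HB Require Import structures.
From mathcomp Require Import all_boot all_order all_algebra complex Rstruct.
From mathcomp Require Import ring lra zify.
Set Implicit Arguments. Unset Strict Implicit. Unset Printing Implicit Defensive.
Import Order.TTheory GRing.Theory Num.Theory.
Local Open Scope ring_scope.

Lemma cos_neq1 (x : Rdefinitions.R) :
  0 < x < 2 * Rtrigo1.PI -> Rtrigo_def.cos x != 1.
Proof.
case/andP => x_gt0 x_lt2PI.
have sin_gt0 : 0 < Rtrigo_def.sin (x / 2).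
  by apply/RltP/Rtrigo1.sin_gt_0; apply/RltP; rewrite ?RealsE; lra.
have := Rtrigo1.cos_2a_sin (x / 2); rewrite !RealsE mulrC divfK ?pnatr_eq0 // => ->.
by rewrite lt_eqF // gtrBl !mulr_gt0 ?ltr0n.
Qed.

Section RootOfUnity.
Variable p : nat.
Hypothesis p_prime : prime p.

Lemma cisD (x y : Rdefinitions.R) :
  Complex (Rtrigo_def.cos x) (Rtrigo_def.sin x) *
  Complex (Rtrigo_def.cos y) (Rtrigo_def.sin y) =
  Complex (Rtrigo_def.cos (x + y)) (Rtrigo_def.sin (x + y)) :> Cx.
Proof.
rewrite -RplusE Cos_plus.cos_plus Rtrigo1.sin_plus /GRing.mul /=.
by congr Complex; rewrite ?RealsE; ring.
Qed.

Lemma omega_expr k : omega p ^+ k =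
  Complex (Rtrigo_def.cos (k%:R * (2 * Rtrigo1.PI / p%:R)))
          (Rtrigo_def.sin (k%:R * (2 * Rtrigo1.PI / p%:R))).
Proof.
elim: k => [|k IHk]; first by rewrite expr0 mul0r Rtrigo_def.cos_0 Rtrigo_def.sin_0.
by rewrite exprSr IHk cisD -[k.+1%:R]natr1 (mulrDl k%:R) mul1r.
Qed.

Lemma omega_expr_order : omega p ^+ p = 1.
Proof.
have p_neq0 : (p%:R : Rdefinitions.R) != 0 by rewrite pnatr_eq0 -lt0n prime_gt0.
by rewrite omega_expr mulrCA divff // mulr1 Rtrigo1.cos_2PI Rtrigo1.sin_2PI.
Qed.

Lemma omega_neq1 : omega p != 1.
Proof.
have p_gt0 : (0 < p%:R :> Rdefinitions.R) by rewrite ltr0n prime_gt0.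
have PI_gt0 : (0 < Rtrigo1.PI :> Rdefinitions.R) by apply/RltP; exact: Rtrigo1.PI_RGT_0.
have twoPI_gt0 : (0 < 2 * Rtrigo1.PI :> Rdefinitions.R) by rewrite mulr_gt0.
apply/eqP => -[/eqP cos1 _]; move: cos1; apply/negP/cos_neq1.
by rewrite divr_gt0 //= ltr_pdivrMr // ltr_pMr // ltr1n prime_gt1.
Qed.

Lemma omega_prim : p.-primitive_root (omega p).
Proof.
have [d d_prim d_dvd] := prim_order_exists (prime_gt0 p_prime) omega_expr_order.
have /orP[/eqP d1|/eqP dp] := (primeP p_prime).2 d d_dvd; last by move: d_prim; rewrite dp.
by move: (prim_expr_order d_prim) omega_neq1; rewrite d1 expr1 => ->; rewrite eqxx.
Qed.

Lemma norm_omega : `|omega p| = 1.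
Proof.
apply/eqP; rewrite -(pexpr_eq1 (n := p)) ?prime_gt0 //.
by rewrite -normrX omega_expr_order normr1.
Qed.

Definition chi (s : 'F_p) : Cx := omega p ^+ s.

Lemma chiD s u : chi (s + u) = chi s * chi u.
Proof.
rewrite /chi -exprD -(prim_expr_mod omega_prim (s + u)).
have -> : nat_of_ord (s + u) = ((s + u) %% (Zp_trunc (pdiv p)).+2)%N by [].
by rewrite [X in (_ %% X)%N](Fp_cast p_prime).
Qed.

Lemma chi0 : chi 0 = 1.
Proof. exact: expr0. Qed.

Lemma chi_eq1 s : (chi s == 1) = (s == 0).
Proof.
have s_lt_p : (s < p)%N by rewrite -[X in (_ < X)%N](Fp_cast p_prime) ltn_ord.
by rewrite /chi -(prim_order_dvd omega_prim) /dvdn modn_small.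
Qed.

Lemma conj_chiM s u : (chi s)^* * chi u = chi (u - s).
Proof.
have -> : chi u = chi (u - s) * chi s by rewrite -chiD subrK.
by rewrite mulrCA [(chi s)^* * _]mulrC -normCK normrX norm_omega !expr1n mulr1.
Qed.

End RootOfUnity.

Section CSS.
Variables (p n : nat).
Hypothesis p_prime : prime p.

Definition dot (b x : Basis p n) : 'F_p := \sum_(i < n) b i * x i.

Lemma dotDr b x y : dot b (x + y) = dot b x + dot b y.
Proof. by rewrite /dot -big_split; apply: eq_bigr => i _; rewrite ffunE mulrDr. Qed.

Lemma dotBl b c x : dot (b - c) x = dot b x - dot c x.
Proof. by rewrite /dot -sumrB; apply: eq_bigr => i _; rewrite !ffunE mulrBl. Qed.

Lemma dot0l x : dot 0 x = 0.
Proof. by rewrite /dot big1 // => i _; rewrite ffunE mul0r. Qed.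

Lemma wtB (a b : Basis p n) : (wt (a - b)%R <= wt a + wt b)%N.
Proof.
rewrite /wt; apply: leq_trans (leq_card_setU _ _).
apply/subset_leq_card/subsetP => i; rewrite !inE !ffunE.
by apply: contraR; rewrite negb_or !negbK => /andP[/eqP-> /eqP->]; rewrite subr0.
Qed.

Lemma EopE a b (v : Hspace p n) x :
  Eop a b v x = chi (dot b (x - a)) * v (x - a).
Proof. by rewrite !ffunE. Qed.

Lemma inner_Eop_shift a b1 b2 (u v : Hspace p n) :
  inner (Eop a b1 u) (Eop a b2 v) =
  \sum_y chi (dot (b2 - b1) y) * ((u y)^* * v y).
Proof.
rewrite /inner (reindex_inj (addIr a)); apply: eq_bigr => y _.
by rewrite !EopE addrK rmorphM mulrACA conj_chiM // dotBl.
Qed.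

Variables C D : {set Basis p n}.

Definition css_vector (u : Hspace p n) : Prop :=
  (forall x, x \notin C -> u x = 0) /\ (forall x d, d \in D -> u (x + d) = u x).

Lemma css_vector_span (X : seq (Hspace p n)) u :
  {in X, forall w, css_vector w} -> u \in <<X>>%VS -> css_vector u.
Proof.
move=> X_css uX; rewrite (coord_span (X := in_tuple X) uX).
have css_i (i : 'I_(size X)) : css_vector X`_i by apply/X_css/mem_nth.
split=> [x xC|x d dD]; rewrite !sum_ffunE.
  by rewrite big1 // => i _; rewrite ffunE ((css_i i).1 x xC) scaler0.
by apply: eq_bigr => i _; rewrite !ffunE ((css_i i).2 x d dD).
Qed.

Hypothesis C_subr : forall x y, x \in C -> y \in C -> x - y \in C.

Lemma inner_Eop_offcode a1 a2 b1 b2 u v :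
  css_vector u -> css_vector v -> a2 - a1 \notin C ->
  inner (Eop a1 b1 u) (Eop a2 b2 v) = 0.
Proof.
move=> [u_supp _] [v_supp _] a_notC; rewrite /inner big1 // => x _; rewrite !EopE.
have [/u_supp->|/negbNE xa1_C] := boolP (x - a1 \notin C).
  by rewrite mulr0 rmorph0 mul0r.
have [/v_supp->|/negbNE xa2_C] := boolP (x - a2 \notin C); first by rewrite !mulr0.
have : (x - a1) - (x - a2) \in C by rewrite C_subr.
by rewrite opprB addrC -addrA addKr (negPf a_notC).
Qed.

Lemma css_phase_sum_eq0 b d u v :
  css_vector u -> css_vector v -> d \in D -> dot b d != 0 ->
  \sum_y chi (dot b y) * ((u y)^* * v y) = 0.
Proof.
move=> [_ u_inv] [_ v_inv] dD bd_neq0; set S := \sum_y _.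
have S_invariant : S = chi (dot b d) * S.
  rewrite {1}/S (reindex_inj (addIr d)) mulr_sumr; apply: eq_bigr => y _.
  by rewrite u_inv // v_inv // dotDr chiD // [chi _ * chi _]mulrC -mulrA.
apply/eqP; move: S_invariant => /eqP; rewrite -subr_eq0 -{1}[S]mul1r -mulrBl.
by rewrite mulf_eq0 subr_eq0 eq_sym chi_eq1 // (negPf bd_neq0).
Qed.

Theorem css_knill_laflamme tx tz :
  (forall a, a \in C -> (wt a <= tx + tx)%N -> a = 0) ->
  (forall b, (wt b <= tz + tz)%N -> (forall d, d \in D -> dot b d = 0) -> b = 0) ->
  forall a1 b1 a2 b2, (wt a1 <= tx)%N -> (wt a2 <= tx)%N ->
    (wt b1 <= tz)%N -> (wt b2 <= tz)%N ->
  exists c : Cx, forall u v, css_vector u -> css_vector v ->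
    inner (Eop a1 b1 u) (Eop a2 b2 v) = c * inner u v.
Proof.
move=> distC distDperp a1 b1 a2 b2 wa1 wa2 wb1 wb2.
have [<-|a12] := eqVneq a1 a2; last first.
  exists 0 => u v uQ vQ; rewrite mul0r inner_Eop_offcode //.
  apply: contra a12 => /distC a0; rewrite eq_sym -subr_eq0 a0 //.
  by rewrite (leq_trans (wtB _ _)) ?leq_add.
have [b12|b12] := eqVneq (b2 - b1) 0.
  exists 1 => u v _ _; rewrite inner_Eop_shift mul1r; apply: eq_bigr => y _.
  by rewrite b12 dot0l chi0 mul1r.
have [d dD bd] : exists2 d, d \in D & dot (b2 - b1) d != 0.
  apply/exists_inP; apply: contraR b12; rewrite negb_exists_in => /forall_inP bD.
  apply/eqP/distDperp; first by rewrite (leq_trans (wtB _ _)) // addnC leq_add.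
  by move=> d /bD/negPn/eqP.
exists 0 => u v uQ vQ; rewrite mul0r inner_Eop_shift.
exact: css_phase_sum_eq0 uQ vQ dD bd.
Qed.

End CSS.

Section BooleanLattice.
Variables (R : idomainType) (m : nat).
Hypothesis two_neq0 : (2%:R : R) != 0.
Local Notation T := {set 'I_m}.

Definition sgn (X : T) : R := (-1) ^+ #|X|.

Lemma sgnMsgn X : sgn X * sgn X = 1.
Proof. by rewrite -expr2 -exprM mulnC exprM sqrrN !expr1n. Qed.

Lemma sgn_neq0 X : sgn X != 0.
Proof. by rewrite signr_eq0. Qed.

Lemma eq_oppr_eq0 (x : R) : x = - x -> x = 0.
Proof.
move/eqP; rewrite -subr_eq0 opprK -mulr2n -mulr_natr mulf_eq0 (negPf two_neq0).
by rewrite orbF => /eqP.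
Qed.

(* Toggling an element of X outside Z is a sign-reversing involution of the
   interval [Z, X]. *)
Lemma sum_sgn_interval (Z X : T) :
  \sum_(S : T | (S \subset X) && (Z \subset S)) sgn S = if Z == X then sgn X else 0.
Proof.
have [->|ZX] := eqVneq Z X.
  by rewrite (big_pred1 X) // => S /=; rewrite eqEsubset.
have [sZX|nsZX] := boolP (Z \subset X); last first.
  by rewrite big_pred0 // => S; apply: contraNF nsZX => /andP[SX /subset_trans]; apply.
have /properP[_ [i iX iZ]] : Z \proper X by rewrite properEneq ZX.
pose h (S : T) := if i \in S then S :\ i else i |: S.
have hK : involutive h.
  move=> S; rewrite /h; case: (boolP (i \in S)) => iS.
    by rewrite setD11 setD1K.
  by rewrite setU11 setU1K.
have sgn_h S : sgn (h S) = - sgn S.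
  rewrite /h /sgn; case: ifPn => iS; last by rewrite cardsU1 iS exprS mulN1r.
  by rewrite [in RHS](cardsD1 i S) iS exprS mulN1r opprK.
have h_interval S : (h S \subset X) && (Z \subset h S) = (S \subset X) && (Z \subset S).
  rewrite /h; case: ifPn => iS.
    rewrite subsetD1 iZ andbT; congr (_ && _).
    apply/idP/idP => [SiX|/(subset_trans (subD1set _ _))//].
    by rewrite -(setD1K iS) subUset sub1set iX.
  rewrite subUset sub1set iX /=; congr (_ && _); apply/idP/idP => ZS; last first.
    exact: subset_trans ZS (subsetU1 _ _).
  apply/subsetP => x xZ; have := subsetP ZS x xZ; rewrite in_setU1.
  by case/orP => // /eqP xi; rewrite -xi xZ in iZ.
apply: eq_oppr_eq0; rewrite {1}(reindex_inj (can_inj hK)) -sumrN.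
by apply: eq_big => S; rewrite ?h_interval // => _; rewrite sgn_h.
Qed.

Lemma sum_sgn_supsets (U : T) :
  \sum_(X : T | U \subset X) sgn X = if U == setT then sgn setT else 0.
Proof. by rewrite -sum_sgn_interval; apply: eq_bigl => X; rewrite subsetT. Qed.

(* zeta c X is the value at the indicator vector of X of the multilinear
   polynomial with coefficients c. *)
Definition zeta (c : T -> R) (X : T) : R := \sum_(S : T | S \subset X) c S.
Definition moebius (g : T -> R) (S : T) : R :=
  sgn S * \sum_(Z : T | Z \subset S) sgn Z * g Z.

Lemma moebiusK g X : zeta (moebius g) X = g X.
Proof.
rewrite /zeta /moebius; under eq_bigr => S _ do rewrite big_distrr /=.
rewrite (exchange_big_dep predT) //=.
under eq_bigr => Z _ do rewrite -big_distrl /= sum_sgn_interval.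
rewrite (bigD1 X) //= eqxx mulrA sgnMsgn mul1r big1 ?addr0 // => Z ZX.
by rewrite (negPf ZX) mul0r.
Qed.

Lemma exists_maximal_nonzero (c : T -> R) S1 : c S1 != 0 ->
  exists2 S0 : T, c S0 != 0 & forall S : T, S0 \proper S -> c S = 0.
Proof.
move=> cS1.
have [S0 cS0 S0_max] := @arg_maxnP _ S1 (fun S => c S != 0) (fun S => #|S|) cS1.
exists S0 => // S S0S; apply: contraTeq (proper_card S0S) => /S0_max.
by rewrite -leqNgt.
Qed.

Section MaximalCoefficient.
Variables (c : T -> R) (S0 : T).
Hypotheses (cS0 : c S0 != 0) (S0_max : forall S : T, S0 \proper S -> c S = 0).

(* Differencing over the coordinates of S0 isolates the top coefficient c S0,
   whatever the values of the other coordinates. *)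
Lemma alternating_zeta_top (W : T) : W \subset ~: S0 ->
  \sum_(Z : T | Z \subset S0) sgn Z * zeta c (Z :|: W) = sgn S0 * c S0.
Proof.
move=> WS0; rewrite /zeta; under eq_bigr => Z _ do rewrite big_distrr /=.
rewrite (exchange_big_dep predT) //=.
under eq_bigr => S _ do rewrite -big_distrl /=.
under eq_bigr => S _ do under eq_bigl => Z do rewrite setUC -subDset.
rewrite (bigD1 S0) //= [X in _ + X]big1 ?addr0 => [|S SS0].
  suff -> : S0 :\: W = S0 by rewrite sum_sgn_interval eqxx.
  by apply/setDidPl; rewrite disjoint_sym disjoints_subset.
rewrite sum_sgn_interval; case: eqP => [SW|_]; last by rewrite mul0r.
by rewrite S0_max ?mulr0 // properEneq eq_sym SS0 -SW subsetDl.
Qed.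

Lemma card_zeta_neq0_maximal :
  (2 ^ (m - #|S0|) <= #|[set X | zeta c X != 0%R]|)%N.
Proof.
have ex_nonzero (W : T) : W \subset ~: S0 ->
    exists Z : T, (Z \subset S0) && (zeta c (Z :|: W) != 0).
  move=> WS0; apply/existsP; apply: contraT; rewrite negb_exists => /forallP Z0.
  have := alternating_zeta_top WS0; rewrite big1 => [/esym/eqP|Z ZS0].
    by rewrite mulf_eq0 (negPf (sgn_neq0 _)) (negPf cS0).
  by move: (Z0 Z); rewrite ZS0 negbK => /eqP->; rewrite mulr0.
pose lift (W : T) :=
  odflt set0 [pick Z : T | (Z \subset S0) && (zeta c (Z :|: W) != 0)] :|: W.
have liftP (W : T) : W \subset ~: S0 ->
    lift W \in [set X | zeta c X != 0] /\ lift W :&: ~: S0 = W.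
  move=> WS0; rewrite /lift; case: pickP => [Z /andP[ZS0 cZW]|none] /=.
    rewrite inE cZW setIUl (_ : Z :&: ~: S0 = set0) ?set0U.
      by split=> //; apply/setIidPl.
    by apply/eqP; rewrite -setDE setD_eq0.
  by have [Z] := ex_nonzero W WS0; rewrite none.
have card_compl : #|~: S0| = (m - #|S0|)%N by rewrite cardsCs setCK card_ord.
rewrite -card_compl -card_powerset -(@card_in_imset _ _ lift) => [|W1 W2].
  apply/subset_leq_card/subsetP => X /imsetP[W]; rewrite powersetE => WS0 ->.
  exact: (liftP W WS0).1.
rewrite !powersetE => W1S0 W2S0 eq_lift.
by rewrite -(liftP W1 W1S0).2 -(liftP W2 W2S0).2 eq_lift.
Qed.

End MaximalCoefficient.

Lemma card_zeta_neq0 (c : T -> R) S1 r :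
  c S1 != 0 -> (forall S : T, (r < #|S|)%N -> c S = 0) ->
  (2 ^ (m - r) <= #|[set X | zeta c X != 0%R]|)%N.
Proof.
move=> /exists_maximal_nonzero[S0 cS0 S0_max] c_deg.
apply: leq_trans (card_zeta_neq0_maximal cS0 S0_max).
rewrite leq_pexp2l // leq_sub2l //.
by rewrite leqNgt; apply: contra cS0 => /c_deg->.
Qed.

Lemma eq0_of_sum_supsets r (b : T -> R) :
  (forall U : T, (r < #|U|)%N -> \sum_(S : T | U \subset S) b S = 0) ->
  forall U : T, (r < #|U|)%N -> b U = 0.
Proof.
move=> sum_eq0; suff b_eq0 k (U : T) : (m - #|U| < k)%N -> (r < #|U|)%N -> b U = 0.
  by move=> U; apply: (b_eq0 (m - #|U|).+1).
elim: k U => [//|k IHk] U Uk rU; have := sum_eq0 U rU.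
rewrite (bigD1 U) //= big1 ?addr0 // => S /andP[US SU].
have /proper_card US_lt : U \proper S by rewrite properEneq eq_sym SU.
have := max_card S; rewrite card_ord => S_le_m.
by apply: IHk; lia.
Qed.

End BooleanLattice.

Section ReedMuller.
Variables (p m t : nat).
Hypotheses (p_prime : prime p) (p_odd : odd p).
Local Notation F := 'F_p.
Local Notation J := ('I_t * {set 'I_m})%type.
Local Notation n := (t * 2 ^ m)%N.

Lemma two_neq0_Fp : (2%:R : F) != 0.
Proof.
rewrite -(dvdn_pcharf (pchar_Fp p_prime)); apply/negP => /(dvdn_leq (isT : (0 < 2)%N)).
rewrite leq_eqVlt ltnS leqNgt prime_gt1 // orbF => /eqP p2.
by move: p_odd; rewrite p2.
Qed.

Lemma card_rm_coords : #|{: J}| = n.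
Proof. by rewrite card_prod !card_ord -cardsT -powersetT card_powerset cardsT card_ord. Qed.

Definition rm_index (j : J) : 'I_n := cast_ord card_rm_coords (enum_rank j).
Definition rm_coord (i : 'I_n) : J := enum_val (cast_ord (esym card_rm_coords) i).

Lemma rm_indexK : cancel rm_index rm_coord.
Proof. by move=> j; rewrite /rm_coord cast_ordK enum_rankK. Qed.

Lemma rm_coordK : cancel rm_coord rm_index.
Proof. by move=> i; rewrite /rm_index enum_valK cast_ordKV. Qed.

Definition rm_block (x : Basis p n) (k : 'I_t) (X : {set 'I_m}) : F := x (rm_index (k, X)).

(* The word with coefficients c: block k is the sign-twisted evaluation on the
   Boolean cube of the multilinear polynomial with coefficients c (k, _); the
   twist by (-1)^|X| makes the dual code behave over F_p as over F_2. *)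
Definition rm_word (c : {ffun J -> F}) : Basis p n :=
  [ffun i => sgn F (rm_coord i).2 * zeta (fun S => c ((rm_coord i).1, S)) (rm_coord i).2].

Lemma rm_word_index c k X :
  rm_word c (rm_index (k, X)) = sgn F X * zeta (fun S => c (k, S)) X.
Proof. by rewrite ffunE rm_indexK. Qed.

Lemma rm_wordB c1 c2 : rm_word (c1 - c2) = rm_word c1 - rm_word c2.
Proof.
apply/ffunP => i; rewrite !ffunE /zeta -mulrBr -sumrB.
by congr (_ * _); apply: eq_bigr => S _; rewrite !ffunE.
Qed.

Lemma rm_word0 : rm_word 0 = 0.
Proof. by rewrite -(subrr 0) rm_wordB subrr. Qed.

Lemma card_block_neq0_le_wt (x : Basis p n) k :
  (#|[set X | rm_block x k X != 0%R]| <= wt x)%N.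
Proof.
have index_inj : injective (fun X => rm_index (k, X)).
  by move=> X1 X2 /(can_inj rm_indexK) [].
rewrite /wt -(card_imset _ index_inj); apply/subset_leq_card/subsetP => i.
by case/imsetP => X; rewrite !inE => xX ->.
Qed.

Lemma wt_rm_word (c : {ffun J -> F}) k S1 r : c (k, S1) != 0 ->
  (forall S : {set 'I_m}, (r < #|S|)%N -> c (k, S) = 0) ->
  (2 ^ (m - r) <= wt (rm_word c))%N.
Proof.
move=> cS1 c_deg; apply: leq_trans (card_block_neq0_le_wt _ k).
apply: leq_trans (card_zeta_neq0 two_neq0_Fp cS1 c_deg) _.
apply/subset_leq_card/subsetP => X; rewrite !inE /rm_block rm_word_index.
by move=> zeta_neq0; rewrite mulf_neq0 ?sgn_neq0.
Qed.

Lemma rm_word_eq0 c : rm_word c = 0 -> c = 0.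
Proof.
move=> c0; apply/ffunP => -[k S1]; rewrite ffunE; apply/eqP; apply: contraT => cS1.
have c_deg (S : {set 'I_m}) : (m < #|S|)%N -> c (k, S) = 0.
  by move=> /leq_trans/(_ (max_card _)); rewrite card_ord ltnn.
have := wt_rm_word cS1 c_deg; rewrite c0 subnn.
suff -> : wt (0 : Basis p n) = 0%N by [].
by apply/eqP; rewrite cards_eq0; apply/eqP/setP => i; rewrite !inE ffunE eqxx.
Qed.

Definition rm_coefs r (c : {ffun J -> F}) : bool :=
  [forall j, (c j != 0) ==> (#|j.2| + r < m)%N].

(* t copies of the sign-twisted Reed-Muller code RM(m - r - 1) (all coefficients
   of degree < m - r), the dual of t copies of RM(r). *)
Definition rm_code r : {set Basis p n} := rm_word @: [set c | rm_coefs r c].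

Lemma rm_coefsB r c1 c2 : rm_coefs r c1 -> rm_coefs r c2 -> rm_coefs r (c1 - c2).
Proof.
move=> /forallP c1_deg /forallP c2_deg; apply/forallP => j; rewrite !ffunE.
apply/implyP => c12j; have [c1j0|] := eqVneq (c1 j) 0; last exact: implyP (c1_deg j).
by apply: implyP (c2_deg j) _; move: c12j; rewrite c1j0 sub0r oppr_eq0.
Qed.

Lemma rm_coefsW r1 r2 c : (r1 <= r2)%N -> rm_coefs r2 c -> rm_coefs r1 c.
Proof.
move=> r12 /forallP c_deg; apply/forallP => j; apply/implyP => /(implyP (c_deg j)).
by apply: leq_ltn_trans; rewrite leq_add2l.
Qed.

Lemma rm_code0 r : 0 \in rm_code r.
Proof.
rewrite -rm_word0; apply: imset_f; rewrite inE.
by apply/forallP => j; rewrite ffunE eqxx.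
Qed.

Lemma rm_codeB r x y : x \in rm_code r -> y \in rm_code r -> x - y \in rm_code r.
Proof.
case/imsetP=> c1; rewrite inE => c1_deg ->; case/imsetP=> c2; rewrite inE => c2_deg ->.
by rewrite -rm_wordB imset_f // inE rm_coefsB.
Qed.

Lemma rm_codeD r x y : x \in rm_code r -> y \in rm_code r -> x + y \in rm_code r.
Proof.
move=> xC yC; have -> : x + y = x - (0 - y) by rewrite sub0r opprK.
by rewrite !rm_codeB ?rm_code0.
Qed.

Lemma rm_code_subset r1 r2 : (r1 <= r2)%N -> rm_code r2 \subset rm_code r1.
Proof.
move=> r12; apply/subsetP => x /imsetP[c]; rewrite inE => c_deg ->.
by rewrite imset_f // inE (rm_coefsW r12).
Qed.

Lemma rm_code_wt r x : x \in rm_code r -> x != 0 -> (2 ^ r.+1 <= wt x)%N.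
Proof.
case/imsetP=> c; rewrite inE => /forallP c_deg -> c_neq0.
have [[k S1] cS1] : exists j, c j != 0.
  apply/existsP; apply: contraR c_neq0; rewrite negb_exists => /forallP c0.
  suff -> : c = 0 by rewrite rm_word0.
  by apply/ffunP => j; rewrite ffunE; apply/eqP/negPn/c0.
have := implyP (c_deg (k, S1)) cS1 => /= S1_lt.
have <- : (m - (m - r.+1) = r.+1)%N by lia.
apply: (wt_rm_word cS1) => S; apply: contraTeq => cS.
by have := implyP (c_deg (k, S)) cS; rewrite /= -leqNgt; lia.
Qed.

Definition rm_delta (j0 : J) : {ffun J -> F} := [ffun j => if j == j0 then 1 else 0].

Lemma zeta_rm_delta k T0 k' X :
  zeta (fun S => rm_delta (k, T0) (k', S)) X =
  if (k' == k) && (T0 \subset X) then 1 else 0.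
Proof.
rewrite /zeta; under eq_bigr => S _ do rewrite ffunE xpair_eqE.
have [_ /=|_] := eqVneq k' k; last by rewrite big1.
rewrite -big_mkcondr /=; have [T0X|T0X] := boolP (T0 \subset X).
  by rewrite (big_pred1 T0) // => S /=; apply/andP/eqP => [[_ /eqP]|->].
by rewrite big_pred0 // => S; apply: contraNF T0X => /andP[SX /eqP <-].
Qed.

Lemma dot_rm_word_delta (b : Basis p n) k T0 :
  dot b (rm_word (rm_delta (k, T0))) =
  \sum_(X : {set 'I_m} | T0 \subset X) rm_block b k X * sgn F X.
Proof.
rewrite /dot (reindex rm_index (onW_bij _ (Bijective rm_indexK rm_coordK))) /=.
transitivity (\sum_(k' < t) \sum_(X : {set 'I_m})
    rm_block b k' X * (sgn F X * if (k' == k) && (T0 \subset X) then 1 else 0)).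
  by rewrite pair_bigA; apply: eq_bigr => -[k' X] _; rewrite rm_word_index zeta_rm_delta.
rewrite (bigD1 k) //= [X in _ + X]big1 ?addr0 => [|k' k'k]; last first.
  by apply: big1 => X _; rewrite (negPf k'k) mulr0 mulr0.
rewrite [RHS]big_mkcond; apply: eq_bigr => X _; rewrite eqxx /=.
by case: ifP; rewrite ?mulr1 ?mulr0.
Qed.

Lemma sum_sgn_supsets_compl (U S : {set 'I_m}) :
  \sum_(X : {set 'I_m} | (~: U \subset X) && (S \subset X)) sgn F X =
  if U \subset S then sgn F [set: 'I_m] else 0.
Proof.
under eq_bigl => X do rewrite andbC -subUset.
by rewrite (sum_sgn_supsets two_neq0_Fp) -subTset -subDset setTD setCS.
Qed.

Lemma rm_dual_moebius_eq0 r (b : Basis p n) :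
  (forall d, d \in rm_code r -> dot b d = 0) ->
  forall k (U : {set 'I_m}), (r < #|U|)%N -> moebius (rm_block b k) U = 0.
Proof.
move=> b_perp k; apply: (eq0_of_sum_supsets two_neq0_Fp) => U rU.
have card_U : (#|U| + #|~: U| = m)%N by rewrite cardsC card_ord.
have delta_in : rm_word (rm_delta (k, ~: U)) \in rm_code r.
  apply: imset_f; rewrite inE; apply/forallP => j; rewrite ffunE.
  case: ifP => [/eqP-> | _]; last by rewrite eqxx.
  by rewrite oner_eq0 /= (leq_trans _ (eq_leq card_U)) // addnC ltn_add2r.
have := b_perp _ delta_in; rewrite dot_rm_word_delta.
under eq_bigr => X _ do
  rewrite -(moebiusK two_neq0_Fp (rm_block b k)) mulrC /zeta big_distrr /=.
rewrite (exchange_big_dep predT) //=.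
under eq_bigr => S _ do
  rewrite -big_distrl /= sum_sgn_supsets_compl (fun_if (fun x => x * _)) mul0r.
rewrite -big_mkcond -big_distrr /= => /eqP.
by rewrite mulf_eq0 (negPf (sgn_neq0 _ _)) => /eqP.
Qed.

Lemma rm_dual_wt r (b : Basis p n) : b != 0 ->
  (forall d, d \in rm_code r -> dot b d = 0) -> (2 ^ (m - r) <= wt b)%N.
Proof.
move=> b_neq0 b_perp.
have [[k X1] bX1] : exists j : J, rm_block b j.1 j.2 != 0.
  apply/existsP; apply: contraR b_neq0; rewrite negb_exists => /forallP b0.
  apply/eqP/ffunP => i; rewrite ffunE -(rm_coordK i); case: (rm_coord i) => k X.
  exact/eqP/negPn/(b0 (k, X)).
have [S1 cS1] : exists S1, moebius (rm_block b k) S1 != 0.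
  apply/existsP; apply: contraR bX1; rewrite negb_exists => /forallP c0.
  rewrite -(moebiusK two_neq0_Fp (rm_block b k) X1) /zeta big1 // => S _.
  exact/eqP/negPn/c0.
apply: leq_trans (card_block_neq0_le_wt b k).
apply: leq_trans (card_zeta_neq0 two_neq0_Fp cS1 (rm_dual_moebius_eq0 b_perp k)) _.
by apply/subset_leq_card/subsetP => X; rewrite !inE (moebiusK two_neq0_Fp).
Qed.

End ReedMuller.

Section CSSReedMullerCode.
Variables (m r1 r2 p t : nat).
Hypotheses (r12 : (r1 < r2)%N) (p_prime : prime p) (p_odd : odd p).
Local Notation F := 'F_p.
Local Notation J := ('I_t * {set 'I_m})%type.
Local Notation n := (t * 2 ^ m)%N.
Local Notation C := (rm_code p m t r1).
Local Notation D := (rm_code p m t r2).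

(* The monomials of C that are not in D; they span a complement of D in C. *)
Definition quotient_monomials : {set J} :=
  [set j : J | (m <= #|j.2| + r2)%N && (#|j.2| + r1 < m)%N].

Local Notation label := {j | j \in quotient_monomials}.

Definition coset_coefs (g : {ffun label -> F}) : {ffun J -> F} :=
  [ffun j => if insub j is Some l then g l else 0].

Definition coset_rep g : Basis p n := rm_word (coset_coefs g).

Lemma coset_rep_code g : coset_rep g \in C.
Proof.
apply: imset_f; rewrite inE; apply/forallP => j; rewrite ffunE; apply/implyP.
by case: insubP => [l + _ _|//]; rewrite inE => /andP[].
Qed.

Lemma coset_rep_inj g1 g2 : coset_rep g1 - coset_rep g2 \in D -> g1 = g2.
Proof.
case/imsetP => c; rewrite inE => /forallP c_deg rep12.
have /(rm_word_eq0 p_prime p_odd)/ffunP c12 :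
    rm_word (coset_coefs g1 - coset_coefs g2 - c) = 0.
  by rewrite !rm_wordB -rep12 subrr.
apply/ffunP => l; apply/eqP; rewrite -subr_eq0; move: (c12 (val l)).
have := valP l; rewrite inE => /andP[l_low _].
have c_l : c (val l) = 0.
  apply/eqP; apply: contraT => /(implyP (c_deg (val l))).
  by rewrite ltnNge l_low.
by rewrite !ffunE valK c_l subr0 => ->.
Qed.

Definition coset_state (y : Basis p n) : Hspace p n :=
  [ffun x : Basis p n => if x - y \in D then 1 else 0].

Definition css_rm_code : {vspace Hspace p n} :=
  <<[seq coset_state (coset_rep g) | g <- enum {ffun label -> F}]>>%VS.

Lemma css_vector_coset_state y : y \in C -> css_vector C D (coset_state y).
Proof.
move=> yC; split=> [x xC|x d dD]; rewrite !ffunE.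
  have /negPf-> // : x - y \notin D.
  apply: contra xC => xyD; rewrite -(subrK y x) rm_codeD //.
  exact: subsetP (rm_code_subset _ _ _ (ltnW r12)) _ xyD.
rewrite addrAC; congr (if _ then _ else _); apply/idP/idP => [xydD|xyD].
  by rewrite -(addrK d (x - y)) rm_codeB.
by rewrite rm_codeD.
Qed.

Lemma css_rm_code_css u : u \in css_rm_code -> css_vector C D u.
Proof.
apply: css_vector_span => _ /mapP[g _ ->].
exact/css_vector_coset_state/coset_rep_code.
Qed.

Lemma free_coset_states :
  free [seq coset_state (coset_rep g) | g <- enum {ffun label -> F}].
Proof.
apply/freeP => k sum_eq0 i.
have idx_lt (j : 'I_#|{ffun label -> F}|) : (j < size (enum {ffun label -> F}))%N.
  by rewrite -cardE.
move/ffunP/(_ (coset_rep (enum {ffun label -> F})`_i)): sum_eq0.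
rewrite sum_ffunE ffunE (bigD1 i) //=.
rewrite big1 ?addr0 => [|j ji]; rewrite ffunE (nth_map 0) ?idx_lt // ffunE.
  by rewrite subrr rm_code0 => /eqP; rewrite scaler_eq0 oner_eq0 orbF => /eqP.
case: ifPn => [/coset_rep_inj/eqP|]; last by rewrite scaler0.
rewrite nth_uniq ?idx_lt ?enum_uniq // => /eqP/val_inj ji_eq.
by rewrite ji_eq eqxx in ji.
Qed.

Lemma dim_css_rm_code : \dim css_rm_code = (p ^ #|quotient_monomials|)%N.
Proof.
rewrite (eqP free_coset_states) size_map -cardE card_ffun card_Fp // card_sig.
by congr (_ ^ _)%N; apply: eq_card => j.
Qed.

End CSSReedMullerCode.

Lemma card_sets_le m r : #|[set U : {set 'I_m} | (#|U| <= r)%N]| = kRM m r.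
Proof.
rewrite /kRM; elim: r => [|r IHr].
  rewrite big_nat1 -[m in 'C(m, _)]card_ord -card_draws.
  by apply: eq_card => U; rewrite !inE leqn0.
rewrite big_nat_recr //= -IHr -[m in 'C(m, _)]card_ord -card_draws.
have -> : [set U : {set 'I_m} | (#|U| <= r.+1)%N] =
    [set U : {set 'I_m} | (#|U| <= r)%N] :|: [set U : {set 'I_m} | #|U| == r.+1].
  by apply/setP => U; rewrite !inE leq_eqVlt ltnS orbC.
rewrite cardsU (_ : _ :&: _ = set0) ?cards0 ?subn0 //.
by apply/setP => U; rewrite !inE andbC; case: eqP => // ->; rewrite ltnn.
Qed.

Lemma card_quotient_monomials m r1 r2 t : (r1 < r2)%N ->
  #|quotient_monomials m r1 r2 t| = (t * (kRM m r2 - kRM m r1))%N.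
Proof.
move=> r12; rewrite -!card_sets_le -cardsDS; last first.
  by apply/subsetP => U; rewrite !inE => /leq_trans; apply; apply: ltnW.
set low := _ :\: _.
have -> : quotient_monomials m r1 r2 t = setX [set: 'I_t] (@setC 'I_m @^-1: low).
  apply/setP => -[k S]; rewrite !inE /=.
  have := cardsC S; rewrite card_ord => card_S.
  move: (#|S|) (#|~: S|) card_S => a b <-; apply/andP/andP; case; lia.
by rewrite cardsX cardsT card_ord card_preimset //; exact: setC_inj.
Qed.

Lemma double_half_pred_lt d : (0 < d)%N -> ((d.-1)./2 + (d.-1)./2 < d)%N.
Proof. by move=> d_gt0; rewrite addnn halfK (leq_ltn_trans (leq_subr _ _)) // prednK. Qed.

Theorem theorem11 (m r1 r2 p t : nat) :
  (1 <= m)%N -> (r1 < r2)%N -> (r2 <= m)%N ->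
  prime p -> odd p -> (1 <= t)%N ->
  exists (dz dx : nat) (Q : {vspace Hspace p (t * 2 ^ m)}),
    [/\ (2 ^ (m - r2) <= dz)%N, (2 ^ r1.+1 <= dx)%N &
        AQECC (t * (kRM m r2 - kRM m r1)) dz dx Q].
Proof.
move=> _ r12 _ p_prime p_odd _.
exists (2 ^ (m - r2))%N, (2 ^ r1.+1)%N, (css_rm_code m r1 r2 p t).
split=> //; split; first by rewrite dim_css_rm_code // card_quotient_monomials.
move=> a1 b1 a2 b2 wa1 wa2 wb1 wb2.
have pow2_gt0 e : (0 < 2 ^ e)%N by rewrite expn_gt0.
have distC a : a \in rm_code p m t r1 ->
    (wt a <= (2 ^ r1.+1).-1./2 + (2 ^ r1.+1).-1./2)%N -> a = 0.
  move=> aC; apply: contraTeq => a_neq0; rewrite -ltnNge.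
  exact: leq_trans (double_half_pred_lt (pow2_gt0 _))
                   (rm_code_wt p_prime p_odd aC a_neq0).
have distDperp b : (wt b <= (2 ^ (m - r2)).-1./2 + (2 ^ (m - r2)).-1./2)%N ->
    (forall d, d \in rm_code p m t r2 -> dot b d = 0) -> b = 0.
  move=> wb b_perp; apply: contraTeq wb => b_neq0; rewrite -ltnNge.
  exact: leq_trans (double_half_pred_lt (pow2_gt0 _))
                   (rm_dual_wt p_prime p_odd b_neq0 b_perp).
have [c KL] :=
  css_knill_laflamme p_prime (@rm_codeB p m t r1) distC distDperp wa1 wa2 wb1 wb2.
by exists c => u v uQ vQ; apply: KL; apply: css_rm_code_css.
Qed.
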